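(* Let $n\ge 3$ and consider the $C_n$ board (a cycle graph with $n$ vertices and $n$ edges embedded in the plane, with its single bounded cell). Suppose some of its edges are marked with arrows so that no vertex is a sink or a source, and suppose no unmarked edge is markable. Then the number of unmarked (hence unmarkable) edges is even.
   Context: A board is a connected planar graph embedded in the plane together with its bounded cells. Edges may be marked with an arrow pointing in one of the two directions along the edge. A sink is a vertex all of whose incident edges are marked with arrows pointing toward it; a source is a vertex all of whose incident edges are marked with arrows pointing away from it. An unmarked edge is markable if it can be marked with an arrow in at least one direction without creating a sink or a source; an unmarked edge that is not markable is called unmarkable. *)

(* The C_n board: vertices 'I_n, edges 'I_n; edge e joins
   vertex e and vertex ordS e (= e+1 mod n). *)
From mathcomp Require Import all_boot.
Set Implicit Arguments. Unset Strict Implicit. Unset Printing Implicit Defensive.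

(* A marking: None = unmarked; Some true = arrow from e to e+1;
   Some false = arrow from e+1 to e. *)
Definition marking (n : nat) := 'I_n -> option bool.

Definition incident n (e v : 'I_n) : bool := (e == v) || (ordS e == v).

Definition points_to n (m : marking n) (e v : 'I_n) : bool :=
  match m e with
  | Some true => ordS e == v
  | Some false => e == v
  | None => false
  end.

Definition points_from n (m : marking n) (e v : 'I_n) : bool :=
  match m e with
  | Some true => e == v
  | Some false => ordS e == v
  | None => false
  end.

Definition is_sink n (m : marking n) (v : 'I_n) : Prop :=
  forall e, incident e v -> points_to m e v.

Definition is_source n (m : marking n) (v : 'I_n) : Prop :=
  forall e, incident e v -> points_from m e v.

Definition no_sink_source n (m : marking n) : Prop :=
  forall v, ~ is_sink m v /\ ~ is_source m v.

Definition mark_edge n (m : marking n) (e : 'I_n) (d : bool) : marking n :=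
  fun e' => if e' == e then Some d else m e'.

Definition markable n (m : marking n) (e : 'I_n) : Prop :=
  m e = None /\ exists d : bool, no_sink_source (mark_edge m e d).

(** Around the cycle, no sink and no source means that any two consecutive
    marked edges point the same way; an unmarked edge is unmarkable exactly
    when its two neighbours are marked and point towards it from both sides
    or away from it on both sides. Give every edge the direction of its own
    arrow, or of its successor's arrow when it is unmarked: this cyclic
    boolean sequence changes value exactly in front of the unmarked edges,
    and a cyclic sequence changes value an even number of times. *)

From mathcomp Require Import all_boot.

Set Implicit Arguments.
Unset Strict Implicit.
Unset Printing Implicit Defensive.

Lemma even_card_neq_ordS n (b : 'I_n -> bool) :
  ~~ odd #|[pred e | b e != b (ordS e)]|.
Proof.
(* Modulo 2 the count is the xor of all [b e (+) b (ordS e)], in which each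
   [b e] occurs twice. *)
rewrite -sum1_card big_mkcond /=.
rewrite (big_morph odd oddD (erefl : odd 0 = false)) /=.
under eq_bigr => e _ do
  rewrite -[if _ then _ else _]/(nat_of_bool _) oddb inE negb_eqb.
by rewrite big_split /= (reindex_inj (@ordS_inj n)) /= addbb.
Qed.

Definition opposed (a b : option bool) : bool :=
  if (a, b) is (Some x, Some y) then x != y else false.

Definition reverse_marking n (m : marking n) : marking n :=
  fun e => omap negb (m e).

Lemma is_source_reverse n (m : marking n) v :
  is_source m v <-> is_sink (reverse_marking m) v.
Proof.
have same e : points_from m e v = points_to (reverse_marking m) e v.
  by rewrite /points_from /points_to /reverse_marking; case: (m e) => [[]|].
by split=> H e /H; rewrite same.
Qed.

Section Cycle.

Variable n : nat.
Hypothesis n_gt1 : 1 < n.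

Lemma ordS_neq (e : 'I_n) : ordS e != e.
Proof.
apply/eqP => /(congr1 val) /=.
have [lt_en|] := ltnP e.+1 n; first by rewrite modn_small // => /esym/n_Sn.
rewrite leq_eqVlt ltnS leqNgt ltn_ord orbF => /eqP en.
by rewrite -en modnn => e0; move: n_gt1; rewrite en -e0.
Qed.

Lemma ord_pred_neq (v : 'I_n) : ord_pred v != v.
Proof. by rewrite -{2}(ord_predK v) eq_sym ordS_neq. Qed.

Lemma is_sinkE (m : marking n) v :
  is_sink m v <-> m (ord_pred v) = Some true /\ m v = Some false.
Proof.
have inc_v : incident v v by rewrite /incident eqxx.
have inc_pv : incident (ord_pred v) v by rewrite /incident ord_predK eqxx orbT.
split=> [sink | [mpv mv] e].
  have := sink _ inc_v; have := sink _ inc_pv.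
  rewrite /points_to ord_predK eqxx.
  rewrite (negbTE (ord_pred_neq v)) (negbTE (ordS_neq v)).
  by case: (m (ord_pred v)) => [[]|] //; case: (m v) => [[]|].
rewrite /incident => /orP[/eqP-> | /eqP Se].
  by rewrite /points_to mv.
have -> : e = ord_pred v by rewrite -Se ordSK.
by rewrite /points_to mpv ord_predK.
Qed.

Lemma no_sink_sourceP (m : marking n) :
  no_sink_source m <-> forall v, ~~ opposed (m (ord_pred v)) (m v).
Proof.
have sink_src v :
    is_sink m v \/ is_source m v <-> opposed (m (ord_pred v)) (m v).
  move: (is_source_reverse m v) (is_sinkE m v) (is_sinkE (reverse_marking m) v).
  rewrite /reverse_marking.
  by case: (m (ord_pred v)) => [[]|]; case: (m v) => [[]|]; rewrite /opposed /=;
    intuition congruence.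
split=> H v.
  by apply/negP => /sink_src; have := H v; tauto.
by split=> S; have /negP := H v; apply; apply/sink_src; tauto.
Qed.

Lemma unmarkable_opposed (m : marking n) e :
  no_sink_source m -> m e = None -> ~ markable m e ->
  opposed (m (ord_pred e)) (m (ordS e)).
Proof.
move=> /no_sink_sourceP nss me unmarkable; apply/negPn/negP => not_opp.
apply: unmarkable; split=> //.
(* Follow a marked neighbour, if any. *)
exists (odflt (odflt true (m (ordS e))) (m (ord_pred e))).
apply/no_sink_sourceP => v; rewrite /mark_edge.
have [-> | _] := eqVneq v e.
  by rewrite (negbTE (ord_pred_neq e)); case: (m (ord_pred e)) => [[]|].
have [pv_e | _] := eqVneq (ord_pred v) e; last by rewrite nss.
have -> : v = ordS e by rewrite -pv_e ord_predK.
by move: not_opp; case: (m (ord_pred e)) => [[]|]; case: (m (ordS e)) => [[]|].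
Qed.

Definition orientation (m : marking n) (e : 'I_n) : bool :=
  if m e is Some d then d else odflt false (m (ordS e)).

Lemma orientation_changes (m : marking n) e :
  no_sink_source m -> (forall e, m e = None -> ~ markable m e) ->
  (orientation m e != orientation m (ordS e)) = (m (ordS e) == None).
Proof.
move=> nss unmarkable; have /no_sink_sourceP/(_ (ordS e)) := nss.
rewrite /orientation ordSK.
case mSe: (m (ordS e)) => [[]|]; try by case: (m e) => [[]|].
have := unmarkable_opposed nss mSe (unmarkable _ mSe); rewrite ordSK.
by case: (m e) => [[]|] //; case: (m (ordS (ordS e))) => [[]|].
Qed.

End Cycle.

Theorem lemma4p2 (n : nat) (hn : 3 <= n) (m : marking n) :
  no_sink_source m ->
  (forall e : 'I_n, m e = None -> ~ markable m e) ->
  ~~ odd #|[pred e : 'I_n | m e == None]|.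
Proof.
move=> nss unmarkable; have n_gt1 : 1 < n by apply: leq_trans hn.
have -> : #|[pred e | m e == None]| = #|[pred e | m (ordS e) == None]|.
  by rewrite -!sum1_card (reindex_inj (@ordS_inj n)).
have -> : #|[pred e | m (ordS e) == None]|
          = #|[pred e | orientation m e != orientation m (ordS e)]|.
  by apply: eq_card => e; rewrite !inE orientation_changes.
exact: even_card_neq_ordS.
Qed.
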